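(* Let $P\subseteq\mathbb{R}^n$ be an $n$-dimensional rational polytope, let $x\in\mathrm{relint}(\mathrm{core}(P))$, and let $F_1,\dots,F_t$ be the facets of $P$ with $d_{F_i}(x)=\mu(P)^{-1}$, with primitive inner normals $a_1,\dots,a_t$. Then $a_1,\dots,a_t$ positively span the linear subspace $K(P)^\perp$. Moreover, if $\mathrm{core}(P)=\{x\}$, then $\{y\in\mathbb{R}^n: d_{F_i}(y)\ge0 \text{ for all } i=1,\dots,t\}$ is a rational polytope containing $P$.
   Context: Write $P$ irredundantly as $P=\{x:\langle a_i,x\rangle\ge b_i\}$ with primitive $a_i\in(\mathbb{Z}^n)^*$, $b_i\in\mathbb{Q}$, each inequality defining a facet $F_i$; $d_{F_i}(x):=\langle a_i,x\rangle-b_i$, $d_P(x):=\min_i d_{F_i}(x)$, $P^{(s)}:=\{x:d_P(x)\ge s\}$. The $\mathbb{Q}$-codegree is $\mu(P):=(\sup\{s>0:P^{(s)}\neq\emptyset\})^{-1}$ and $\mathrm{core}(P):=P^{(1/\mu(P))}$. $K(P)$ is the linear subspace of $\mathbb{R}^n$ parallel to the affine hull of $\mathrm{core}(P)$, and $K(P)^\perp\subseteq(\mathbb{R}^n)^*$ is the set of linear functionals vanishing on $K(P)$. *)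

From HB Require Import structures.
From mathcomp Require Import all_boot all_order all_algebra.
From mathcomp Require Import all_classical all_reals.
Set Implicit Arguments. Unset Strict Implicit. Unset Printing Implicit Defensive.
Import Order.TTheory GRing.Theory Num.Theory.
Local Open Scope ring_scope.
Local Open Scope classical_set_scope.

Section Defs.
Variables (R : realType) (n m : nat).
(* The polytope data: inequalities <a_i, x> >= b_i, i : 'I_m. *)
Variables (a : 'I_m -> 'rV[int]_n) (b : 'I_m -> rat).

Definition pt_dF (i : 'I_m) (x : 'rV[R]_n) : R :=
  \sum_(j < n) ((a i) ord0 j)%:~R * x ord0 j - ratr (b i).

Definition pt_Poly : set 'rV[R]_n := [set x | forall i, 0 <= pt_dF i x].

Definition pt_Psub (s : R) : set 'rV[R]_n := [set x | forall i, s <= pt_dF i x].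

Definition pt_mu : R := (sup [set s : R | 0 < s /\ pt_Psub s !=set0])^-1.

Definition pt_core : set 'rV[R]_n := pt_Psub (pt_mu^-1).

Definition pt_irredundant : Prop :=
  forall i, exists y : 'rV[R]_n,
    (forall k, k != i -> 0 <= pt_dF k y) /\ pt_dF i y < 0.

Definition pt_bounded_set (C : set 'rV[R]_n) : Prop :=
  exists M : R, forall y, C y -> forall j, `|y ord0 j| <= M.
End Defs.

Section Geom.
Variables (R : realType) (n : nat).

(* Linear subspace parallel to the affine hull of C: the linear span of
   the differences y - z, y z in C. *)
Definition pt_dirspace (C : set 'rV[R]_n) : set 'rV[R]_n :=
  [set v | exists k (c : 'I_k -> R) (y z : 'I_k -> 'rV[R]_n),
      (forall j, C (y j) /\ C (z j)) /\ v = \sum_(j < k) c j *: (y j - z j)].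

Definition pt_relint (C : set 'rV[R]_n) : set 'rV[R]_n :=
  [set x | C x /\ exists eps : R, 0 < eps /\
     forall y, pt_dirspace C (y - x) ->
       (forall j, `|y ord0 j - x ord0 j| < eps) -> C y].

(* K^pt_perp: linear functionals (row vectors w, pairing sum_j w_j v_j)
   vanishing on K *)
Definition pt_perp (K : set 'rV[R]_n) : set 'rV[R]_n :=
  [set w | forall v, K v -> \sum_(j < n) w ord0 j * v ord0 j = 0].

Definition pt_rat_polytope (Q : set 'rV[R]_n) : Prop :=
  exists k (p : 'I_k -> 'rV[rat]_n),
    Q = [set y | exists c : 'I_k -> R, (forall j, 0 <= c j) /\
           \sum_(j < k) c j = 1 /\
           y = \sum_(j < k) c j *: map_mx (fun q : rat => ratr q) (p j)].
End Geom.

Definition pt_primitive (n : nat) (v : 'rV[int]_n) : Prop :=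
  \big[gcdz/0]_(j < n) v ord0 j = 1.

Arguments pt_dF {R n m} a b i x.
Arguments pt_Poly R {n m} a b.
Arguments pt_Psub R {n m} a b s.
Arguments pt_mu R {n m} a b.
Arguments pt_core R {n m} a b.
Arguments pt_irredundant R {n m} a b.
Arguments pt_bounded_set {R n} C.
Arguments pt_dirspace {R n} C.
Arguments pt_relint {R n} C.
Arguments pt_perp {R n} K.
Arguments pt_rat_polytope {R n} Q.
Arguments pt_primitive {n} v.

From HB Require Import structures.
From mathcomp Require Import all_boot all_order all_algebra.
From mathcomp Require Import all_classical all_reals.
From mathcomp Require Import ring lra zify.
Set Implicit Arguments. Unset Strict Implicit. Unset Printing Implicit Defensive.
Import Order.TTheory GRing.Theory Num.Theory.
Local Open Scope ring_scope.
Local Open Scope classical_set_scope.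

(* Write s = mu(P)^-1, so that core(P) = {y : d_F(y) >= s for every facet F}.
   A facet tight at a relative interior point x of the core is tight on the
   whole core: if it were slack at some y of the core, the point of the core
   obtained by moving from x slightly away from y would violate it.  Hence the
   nonnegative combinations of the normals tight at x are constant on the core,
   i.e. lie in K(P)^perp.  Conversely, if w in K(P)^perp is not such a
   combination, Farkas' lemma gives v with <a_i, v> >= 0 for the tight facets
   and <w, v> < 0; then x + e v lies in the core for small e > 0, so v is in
   K(P) and <w, v> = 0, a contradiction.
   If core(P) = {x}, then K(P)^perp is everything, so the tight normals
   positively span the dual space.  In the polyhedron Q cut out by the tight
   inequalities, every line through a point then leaves Q in both directions;
   walking to the boundary writes each point of Q as a convex combination of
   vertices, and a vertex is the unique solution of a rational linear system,
   hence rational. *)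

Section Dot.
Variables (R : realFieldType) (n : nat).
Implicit Types (u v w : 'rV[R]_n).

Definition dot u v : R := \sum_(j < n) u ord0 j * v ord0 j.

Lemma dotC u v : dot u v = dot v u.
Proof. by apply: eq_bigr => j _; rewrite mulrC. Qed.

Lemma dotDr u v w : dot w (u + v) = dot w u + dot w v.
Proof. by rewrite /dot -big_split; apply: eq_bigr => j _; rewrite mxE mulrDr. Qed.

Lemma dotZr t u v : dot v (t *: u) = t * dot v u.
Proof. by rewrite /dot mulr_sumr; apply: eq_bigr => j _; rewrite mxE mulrCA. Qed.

Lemma dotZl t u v : dot (t *: u) v = t * dot u v.
Proof. by rewrite dotC dotZr dotC. Qed.

Lemma dotNr u v : dot v (- u) = - dot v u.
Proof. by rewrite -scaleN1r dotZr mulN1r. Qed.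

Lemma dotNl u v : dot (- u) v = - dot u v.
Proof. by rewrite dotC dotNr dotC. Qed.

Lemma dotBr u v w : dot w (u - v) = dot w u - dot w v.
Proof. by rewrite dotDr dotNr. Qed.

Lemma dotBl u v w : dot (u - v) w = dot u w - dot v w.
Proof. by rewrite dotC dotBr !(dotC w). Qed.

Lemma dot0r v : dot v 0 = 0.
Proof. by rewrite /dot big1 // => j _; rewrite mxE mulr0. Qed.

Lemma dot_sumr (I : Type) (r : seq I) (P : pred I) (F : I -> 'rV[R]_n) v :
  dot v (\sum_(i <- r | P i) F i) = \sum_(i <- r | P i) dot v (F i).
Proof.
elim/big_rec2: _ => [|i y1 y2 _ <-]; first exact: dot0r.
by rewrite dotDr.
Qed.

Lemma dot_suml (I : Type) (r : seq I) (P : pred I) (F : I -> 'rV[R]_n) v :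
  dot (\sum_(i <- r | P i) F i) v = \sum_(i <- r | P i) dot (F i) v.
Proof. by rewrite dotC dot_sumr; apply: eq_bigr => i _; rewrite dotC. Qed.

Lemma dotvv_gt0 v : v != 0 -> 0 < dot v v.
Proof.
have sq_ge0 k : 0 <= v ord0 k * v ord0 k by rewrite -expr2 sqr_ge0.
move=> nv; rewrite lt_def sumr_ge0 ?andbT //; apply: contra nv => /eqP vv0.
apply/eqP/matrixP => i j; rewrite (ord1 i) mxE.
have /eqP := @psumr_eq0P _ _ predT _ (fun k _ => sq_ge0 k) vv0 j isT.
by rewrite mulf_eq0 orbb => /eqP.
Qed.

End Dot.

Section Farkas.
Variables (R : realFieldType) (n : nat).
Implicit Types (a c v w z : 'rV[R]_n) (s : seq 'rV[R]_n).
Local Notation dot := (@dot R n).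

(* [in_cone s c]: c is a nonnegative combination of the vectors of s.  Peeling
   off one generator at a time makes Fourier-Motzkin elimination a plain
   induction. *)
Fixpoint in_cone s c : Prop :=
  if s is a :: s' then exists2 t, 0 <= t & in_cone s' (c - t *: a) else c = 0.

Lemma in_cone_cons s a c t : 0 <= t -> in_cone s c -> in_cone (a :: s) (c + t *: a).
Proof. by move=> t0 h; exists t; rewrite // addrK. Qed.

(* Projection along a onto the hyperplane [dot _ v = 0]. *)
Definition fm_proj v a z := dot z v *: a - dot a v *: z.

Lemma fm_proj_self v a : fm_proj v a a = 0.
Proof. exact: subrr. Qed.

Lemma dot_fm_proj v a z w :
  dot (fm_proj v a z) w = dot z (dot a w *: v - dot a v *: w).
Proof. by rewrite dotBl dotBr !dotZl !dotZr mulrC. Qed.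

Lemma in_cone_fm_proj s a v y :
    (forall z, z \in s -> 0 <= dot z v) ->
    in_cone [seq fm_proj v a z | z <- s] y ->
  exists z t, [/\ in_cone s z, 0 <= t & y = t *: a - dot a v *: z].
Proof.
elim: s y => [|z s IH] y hs /=.
  by move=> ->; exists 0, 0; rewrite scale0r scaler0 subr0.
case=> t t0 /(IH _ (fun w hw => hs w (mem_behead (s := z :: s) hw))).
case=> z' [t' [hz' t'0 ey]].
have hz : 0 <= dot z v by apply: hs; rewrite inE eqxx.
exists (z' + t *: z), (t' + t * dot z v); split; first exact: in_cone_cons.
  by rewrite addr_ge0 // mulr_ge0.
by rewrite -(subrK (t *: fm_proj v a z) y) ey; apply/matrixP => i j; rewrite !mxE; ring.
Qed.

Lemma in_cone_fm_lift s a v c :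
    (forall z, z \in s -> 0 <= dot z v) -> dot a v < 0 -> dot c v < 0 ->
    in_cone [seq fm_proj v a z | z <- s] (fm_proj v a c) ->
  in_cone (a :: s) c.
Proof.
move=> hs av0 cv0 /(in_cone_fm_proj hs) [z [t [hz t0 ey]]].
set p := dot a v in av0 ey; set q := dot c v in cv0 ey.
have p0 : p != 0 by rewrite lt_eqF.
have tq : 0 <= t - q by rewrite subr_ge0 ltW // (lt_le_trans cv0).
exists ((t - q) / - p); first by rewrite divr_ge0 // oppr_ge0 ltW.
suff -> : c - (t - q) / - p *: a = z by [].
apply/matrixP => i j; have /matrixP/(_ i j) := ey; rewrite !mxE => e.
apply: (mulfI p0); have -> : p * z i j = t * a i j - (q * a i j - p * c i j) by rewrite e; ring.
by field.
Qed.

Lemma fm_separation s a v c w :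
    (forall z, z \in [seq fm_proj v a z | z <- s] -> 0 <= dot z w) ->
    dot (fm_proj v a c) w < 0 ->
  exists u, (forall z, z \in a :: s -> 0 <= dot z u) /\ dot c u < 0.
Proof.
move=> hs hc; exists (dot a w *: v - dot a v *: w); rewrite -dot_fm_proj; split=> // z.
rewrite inE -dot_fm_proj => /predU1P [->|hz]; first by rewrite fm_proj_self dotC dot0r.
exact/hs/map_f.
Qed.

Lemma farkas s c :
  in_cone s c \/ exists v, (forall z, z \in s -> 0 <= dot z v) /\ dot c v < 0.
Proof.
(* Induction on the size: the hypothesis is applied to the projected list. *)
have [k hk] : exists k, size s = k by eexists.
elim: k s c hk => [|k IH] [|a s] c //= => [_|[hk]].
  have [->|nc] := eqVneq c 0; first by left.
  right; exists (- c); split=> //; rewrite dotNr oppr_lt0; exact: dotvv_gt0.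
have [hc|[v [hv hcv]]] := IH s c hk.
  by left; exists 0 => //; rewrite scale0r subr0.
have [av0|av0] := leP 0 (dot a v).
  by right; exists v; split=> // z; rewrite inE => /predU1P [->|/hv].
have [|[w [hw hcw]]] := IH _ (fm_proj v a c) (etrans (size_map (fm_proj v a) s) hk).
  by move=> /(in_cone_fm_lift hv av0 hcv); left.
by right; exact: fm_separation hw hcw.
Qed.

End Farkas.

Lemma exists_pos_lbound (R : realDomainType) (I : finType) (P : pred I) (r : I -> R) :
  (forall i, P i -> 0 < r i) -> exists2 e, 0 < e & forall i, P i -> e <= r i.
Proof.
move=> hr; exists (\big[Num.min/1]_(i | P i) r i).
  by elim/big_ind: _ => [|u v hu hv|i Pi]; [exact: ltr01|rewrite lt_min hu hv|exact: hr].
by move=> i Pi; rewrite (bigD1 i) //= ge_min lexx.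
Qed.

Section Geometry.
Variables (R : realType) (n : nat).
Implicit Types (C : set 'rV[R]_n) (x y z v : 'rV[R]_n).

Lemma dirspace_scale C y z c : C y -> C z -> pt_dirspace C (c *: (y - z)).
Proof.
move=> Cy Cz; exists 1%N, (fun _ => c), (fun _ => y), (fun _ => z).
by split=> //; rewrite big_ord1.
Qed.

Lemma dirspace_set1 x v : pt_dirspace [set x] v -> v = 0.
Proof.
case=> k [c [y [z [hyz ->]]]]; apply: big1 => j _.
by have [-> ->] := hyz j; rewrite subrr scaler0.
Qed.

Lemma dirspace_nonempty C v : pt_dirspace C v -> v != 0 -> C !=set0.
Proof.
case=> [[|k]] [c [y [z [hyz ev]]]]; last by exists (y ord0); case: (hyz ord0).
by rewrite ev big_ord0 eqxx.
Qed.

Lemma relint_push C x y : pt_relint C x -> C y -> exists2 e, 0 < e & C (x - e *: (y - x)).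
Proof.
case=> Cx [eps [eps0 heps]] Cy.
have [e e0 he] := @exists_pos_lbound R _ predT (fun j => eps / (`|y ord0 j - x ord0 j| + 1))
  (fun j _ => divr_gt0 eps0 (ltr_wpDl (normr_ge0 _) ltr01)).
exists e => //; apply: heps => [|j].
  by rewrite addrAC subrr add0r -scaleNr; exact: dirspace_scale.
rewrite !mxE addrAC subrr add0r normrN normrM (gtr0_norm e0).
have := he j isT; rewrite ler_pdivlMr ?ltr_wpDl // => /(lt_le_trans _); apply.
by rewrite mulrDr mulr1 ltrDl.
Qed.

Definition rat_hull k (p : 'I_k -> 'rV[rat]_n) : set 'rV[R]_n :=
  [set y | exists c : 'I_k -> R, (forall j, 0 <= c j) /\
           \sum_(j < k) c j = 1 /\
           y = \sum_(j < k) c j *: map_mx (fun q : rat => ratr q) (p j)].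

Lemma rat_hull_convex k (p : 'I_k -> 'rV[rat]_n) y1 y2 l :
  rat_hull p y1 -> rat_hull p y2 -> 0 <= l <= 1 -> rat_hull p (l *: y1 + (1 - l) *: y2).
Proof.
move=> [c1 [c10 [c11 ->]]] [c2 [c20 [c21 ->]]] /andP[l0 l1].
exists (fun j => l * c1 j + (1 - l) * c2 j); split.
  by move=> j; rewrite addr_ge0 // mulr_ge0 // subr_ge0.
split; first by rewrite big_split /= -!mulr_sumr c11 c21 !mulr1 addrC subrK.
rewrite !scaler_sumr -big_split /=; apply: eq_bigr => j _.
by apply/matrixP => i0 j0; rewrite !mxE; ring.
Qed.

Lemma rat_hull_vertex k (p : 'I_k -> 'rV[rat]_n) j0 :
  rat_hull p (map_mx (fun q : rat => ratr q) (p j0)).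
Proof.
exists (fun j => (j == j0)%:R); split; first by move=> j; case: (j == j0).
rewrite (bigD1 j0) //= eqxx big1 ?addr0 => [|j /negPf ->//].
split=> //; rewrite (bigD1 j0) //= eqxx big1 ?addr0 ?scale1r // => j /negPf ->.
exact: scale0r.
Qed.

End Geometry.

Section Polytope.
Variables (R : realType) (n m : nat) (a : 'I_m -> 'rV[int]_n) (b : 'I_m -> rat).
Local Notation dF := (pt_dF a b).
Local Notation dot := (@dot R n).

Definition normal i : 'rV[R]_n := map_mx (fun z : int => z%:~R) (a i).

Lemma dF_dot i y : dF i y = dot (normal i) y - ratr (b i).
Proof. by congr (_ - _); apply: eq_bigr => j _; rewrite mxE. Qed.

Lemma dF_shift i y v t : dF i (y + t *: v) = dF i y + t * dot (normal i) v.
Proof. by rewrite !dF_dot dotDr dotZr addrAC. Qed.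

Definition cone_on (I : pred 'I_m) (w : 'rV[R]_n) := exists lam : 'I_m -> R,
  (forall i, 0 <= lam i) /\ (forall i, ~~ I i -> lam i = 0) /\
  w = \sum_(i < m) lam i *: normal i.

Lemma in_cone_cone_on (I : pred 'I_m) (l : seq 'I_m) w :
  {subset l <= I} -> in_cone (map normal l) w -> cone_on I w.
Proof.
elim: l w => [|i0 l IH] w /= lI.
  move=> ->; exists (fun _ => 0); do 2!split=> //.
  by rewrite big1 // => i _; rewrite scale0r.
case=> t t0 /IH [j|lam [lam0 [lamI e]]]; first by move=> jl; apply: lI; rewrite inE jl orbT.
exists (fun j => lam j + (j == i0)%:R * t); split.
  by move=> j; rewrite addr_ge0 ?mulr_ge0 //; case: (j == i0).
split.
  move=> j jI; rewrite lamI //; case: eqP => [ej|]; last by rewrite mulr0n mul0r addr0.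
  by move: jI; rewrite ej => /negP[]; apply: lI; rewrite mem_head.
rewrite -(subrK (t *: normal i0) w) e; under [RHS]eq_bigr do rewrite scalerDl.
rewrite big_split /=; congr (_ + _).
rewrite (bigD1 i0) //= eqxx mul1r big1 ?addr0 // => j /negPf ->.
by rewrite mul0r scale0r.
Qed.

Section Core.
Variable s : R.
Local Notation C := (pt_Psub R a b s).

Lemma relint_tight x y i : pt_relint C x -> C y -> dF i x = s -> dF i y = s.
Proof.
move=> hx Cy hi; have [e e0 Cz] := relint_push hx Cy.
have dFy : dF i y = s + dot (normal i) (y - x).
  by rewrite -{1}(subrK x y) addrC -{1}[y - x]scale1r dF_shift hi mul1r.
have := Cz i; rewrite -scaleNr dF_shift hi lerDl mulNr oppr_ge0 pmulr_rle0 // => d_le0.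
have d_ge0 : 0 <= dot (normal i) (y - x) by rewrite -(lerD2l s) addr0 -dFy; exact: Cy.
rewrite dFy; suff -> : dot (normal i) (y - x) = 0 by rewrite addr0.
by apply/eqP; rewrite eq_le d_le0.
Qed.

Lemma perp_cone x w : pt_relint C x -> pt_perp (pt_dirspace C) w ->
  cone_on (fun i => dF i x == s) w.
Proof.
move=> hx hw; have Cx := hx.1.
set l := [seq i <- enum 'I_m | dF i x == s].
have [|[v [hv wv0]]] := farkas (map normal l) w.
  by apply: in_cone_cone_on => i; rewrite mem_filter => /andP[].
have slack i : dF i x != s -> 0 < dF i x - s by rewrite subr_gt0 lt_def => ->; exact: Cx.
have [e e0 he] := @exists_pos_lbound R _ (fun i => dF i x != s)
  (fun i => (dF i x - s) / (`|dot (normal i) v| + 1))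
  (fun i hi => divr_gt0 (slack i hi) (ltr_wpDl (normr_ge0 _) ltr01)).
have Cxv : C (x + e *: v).
  move=> i; rewrite dF_shift; have [hi|hi] := eqVneq (dF i x) s.
    rewrite hi lerDl mulr_ge0 ?(ltW e0) // hv // map_f //.
    by rewrite mem_filter hi eqxx mem_enum.
  have := he i hi; rewrite ler_pdivlMr ?ltr_wpDl // => h.
  have := lerNnormlW (lexx `|dot (normal i) v|); have := normr_ge0 (dot (normal i) v).
  nra.
have := hw _ (dirspace_scale 1 Cxv Cx); rewrite addrAC subrr add0r scale1r.
by rewrite -/(dot w (e *: v)) dotZr => /eqP; rewrite mulf_eq0 gt_eqF //= lt_eqF.
Qed.

Lemma cone_perp x w : pt_relint C x -> cone_on (fun i => dF i x == s) w ->
  pt_perp (pt_dirspace C) w.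
Proof.
move=> hx [lam [lam0 [lamI ->]]] v [k [c [y [z [hyz ->]]]]].
have const u : C u -> dot (\sum_(i < m) lam i *: normal i) u =
    \sum_(i < m) lam i * (s + ratr (b i)).
  move=> Cu; rewrite dot_suml; apply: eq_bigr => i _; rewrite dotZl.
  have [hi|/lamI ->] := eqVneq (dF i x) s; last by rewrite !mul0r.
  by have /eqP := relint_tight hx Cu hi; rewrite dF_dot subr_eq addrC => /eqP ->.
rewrite -/(dot _ _) dot_sumr big1 // => j _.
by have [Cy Cz] := hyz j; rewrite dotZr dotBr !const // subrr mulr0.
Qed.

End Core.

Definition normals_mx (S : {set 'I_m}) : 'M[rat]_(n, m) :=
  \matrix_(j, i) (if i \in S then (a i ord0 j)%:~R else 0).

Lemma normals_mxE S (u : 'rV[R]_n) i :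
  (u *m map_mx ratr (normals_mx S)) ord0 i = if i \in S then dot (normal i) u else 0.
Proof.
rewrite !mxE; case: ifP => iS; last by rewrite big1 // => j _; rewrite !mxE iS rmorph0 mulr0.
by apply: eq_bigr => j _; rewrite !mxE iS ratr_int mulrC.
Qed.

Section Pointed.
Variable I : pred 'I_m.
Hypothesis spanI : forall w, cone_on I w.
Local Notation Q := [set y : 'rV[R]_n | forall i, I i -> 0 <= dF i y].
Local Notation ratv := (map_mx (fun q : rat => ratr q)).

Definition tight (y : 'rV[R]_n) : {set 'I_m} := [set i | I i && (dF i y == 0)].

Definition vertex y :=
  Q y /\ forall v, (forall i, i \in tight y -> dot (normal i) v = 0) -> v = 0.

Lemma tight_dot z i : i \in tight z -> dot (normal i) z = ratr (b i).
Proof. by rewrite inE => /andP[_ /eqP]; rewrite dF_dot => /subr0_eq. Qed.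

Lemma vertex_unique z u : vertex z ->
  (forall i, i \in tight z -> dot (normal i) u = dot (normal i) z) -> u = z.
Proof. by move=> [_ hz] hu; apply/subr0_eq/hz => i hi; rewrite dotBr hu // subrr. Qed.

Lemma vertex_rat z : vertex z -> exists q : 'rV[rat]_n, ratv q = z.
Proof.
move=> vz; pose beta : 'rV[rat]_m := \row_i (if i \in tight z then b i else 0).
have : (map_mx ratr beta <= map_mx (@ratr R) (normals_mx (tight z)))%MS.
  apply/submxP; exists z; apply/matrixP => i0 i; rewrite (ord1 i0) normals_mxE !mxE.
  by case: ifP => hi; [rewrite tight_dot|rewrite rmorph0].
rewrite map_submx => /submxP[D /(congr1 (map_mx (@ratr R)))/matrixP zD].
exists D; apply: (vertex_unique vz) => i hi; rewrite (tight_dot hi).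
by have := zD ord0 i; rewrite map_mxM normals_mxE hi !mxE hi => ->.
Qed.

Lemma exists_neg_normal v : v != 0 -> exists2 i, I i & dot (normal i) v < 0.
Proof.
move=> nv; have [lam [lam0 [lamI ev]]] := spanI (- v).
have : dot (- v) v < 0 by rewrite dotNl oppr_lt0 dotvv_gt0.
rewrite ev dot_suml => sum_lt0.
have [i hi] : exists i, lam i * dot (normal i) v < 0.
  apply/not_existsP => hn; move: sum_lt0; apply/negP; rewrite -leNgt.
  by apply: sumr_ge0 => i _; rewrite dotZl leNgt; apply/negP/hn.
have lam_gt0 : 0 < lam i.
  by rewrite lt_def lam0 andbT; apply: contraTneq hi => ->; rewrite mul0r ltxx.
exists i; last by rewrite -(pmulr_rlt0 _ lam_gt0).
by apply: contraTT lam_gt0 => /lamI ->; rewrite ltxx.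
Qed.

Lemma ray_exit y v : Q y -> v != 0 ->
    (forall i, i \in tight y -> dot (normal i) v = 0) ->
  exists2 t, 0 < t & Q (y + t *: v) /\ (#|tight y| < #|tight (y + t *: v)|)%N.
Proof.
move=> Qy nv hv; have [i1 Ii1 vi1] := exists_neg_normal nv.
pose P i := I i && (dot (normal i) v < 0).
have Pi1 : P i1 by rewrite /P Ii1 vi1.
case: (arg_minP (fun i => dF i y / - dot (normal i) v) Pi1) => i0 /andP[Ii0 vi0] hmin.
set t := dF i0 y / - dot (normal i0) v.
have y0 : 0 < dF i0 y.
  rewrite lt_def Qy // andbT; apply: contraTneq vi0 => dF0.
  by rewrite hv ?ltxx // inE Ii0 dF0 eqxx.
have t0 : 0 < t by rewrite divr_gt0 // oppr_gt0.
exists t => //; split.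
  move=> i Ii; rewrite dF_shift; have [vi|vi] := leP 0 (dot (normal i) v).
    by rewrite addr_ge0 ?Qy // mulr_ge0 // (ltW t0).
  have := hmin i; rewrite /P Ii vi => /(_ isT).
  by rewrite -/t ler_pdivlMr ?oppr_gt0 // mulrN -subr_ge0 opprK.
apply: proper_card; apply/properP; split.
  apply/fintype.subsetP => i; rewrite !inE => /andP[Ii /eqP dFi].
  by rewrite Ii dF_shift dFi hv ?mulr0 ?addr0 ?eqxx // inE Ii dFi eqxx.
exists i0; last by rewrite inE Ii0 gt_eqF.
by rewrite inE Ii0 dF_shift /t invrN mulrN mulNr mulfVK ?subrr ?eqxx // lt_eqF.
Qed.

Lemma vertex_ind (Pr : 'rV[R]_n -> Prop) :
    (forall y, vertex y -> Pr y) ->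
    (forall y v t1 t2, 0 < t1 -> 0 < t2 -> Pr (y + t1 *: v) -> Pr (y - t2 *: v) -> Pr y) ->
  forall y, Q y -> Pr y.
Proof.
move=> hV hS y; have [N] := ubnP (m - #|tight y|); elim: N => // N IH in y * => hN Qy.
have closer z : (#|tight y| < #|tight z|)%N -> (m - #|tight z| < N)%N.
  have : (#|tight z| <= m)%N by rewrite -[X in (_ <= X)%N]card_ord max_card.
  by move: hN; set k := #|tight y|; set k' := #|tight z|; lia.
have [[v [tv nv]]|not_line] :=
  pselect (exists v, (forall i, i \in tight y -> dot (normal i) v = 0) /\ v != 0).
  have [t1 t10 [Q1 lt1]] := ray_exit Qy nv tv.
  have tNv i : i \in tight y -> dot (normal i) (- v) = 0.
    by rewrite dotNr => /tv ->; rewrite oppr0.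
  have nNv : - v != 0 by rewrite oppr_eq0.
  have [t2 t20 [Q2 lt2]] := ray_exit Qy nNv tNv.
  rewrite scalerN in Q2 lt2; apply: (hS y v t1 t2) => //; apply: IH => //; exact: closer.
apply: hV; split=> // v tv; apply: (contra_notP _ not_line) => /eqP nv.
by exists v.
Qed.

Lemma exists_vertex y : Q y -> exists z, vertex z.
Proof.
move=> Qy; apply: (@vertex_ind (fun _ => exists z, vertex z)) Qy => [z vz|//].
by exists z.
Qed.

Lemma vertex_family y0 : Q y0 -> exists k (p : 'I_k -> 'rV[rat]_n),
  (forall j, vertex (ratv (p j))) /\ forall z, vertex z -> exists j, z = ratv (p j).
Proof.
move=> Qy0; have [z0 vz0] := exists_vertex Qy0; have [q0 eq0] := vertex_rat vz0.
have pick S : exists q : 'rV[rat]_n,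
    vertex (ratv q) /\ forall z, vertex z -> tight z = S -> z = ratv q.
  have [[z [vz <-]]|noS] := pselect (exists z, vertex z /\ tight z = S).
    have [q qz] := vertex_rat vz; exists q; rewrite qz; split=> // z' vz' tz'.
    apply: (vertex_unique vz) => i hi.
    by rewrite !tight_dot // tz'.
  exists q0; rewrite eq0; split=> // z vz tz.
  by case: noS; exists z.
have [f hf] := choice pick.
exists #|{set 'I_m}|, (fun j => f (enum_val j)); split=> [j|z vz]; first exact: (hf _).1.
by exists (enum_rank (tight z)); rewrite enum_rankK; apply: (hf _).2.
Qed.

Lemma rat_hull_subQ k (p : 'I_k -> 'rV[rat]_n) :
  (forall j, Q (ratv (p j))) -> rat_hull p `<=` Q.
Proof.
move=> hp y [c [c0 [c1 ->]]] i Ii.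
have -> : dF i (\sum_(j < k) c j *: ratv (p j)) = \sum_(j < k) c j * dF i (ratv (p j)).
  rewrite dF_dot dot_sumr; under [RHS]eq_bigr do rewrite dF_dot mulrBr.
  rewrite sumrB -mulr_suml c1 mul1r; congr (_ - _).
  by apply: eq_bigr => j _; rewrite dotZr.
by apply: sumr_ge0 => j _; rewrite mulr_ge0 // hp.
Qed.

Lemma pointed_rat_polytope y0 : Q y0 -> pt_rat_polytope Q.
Proof.
move=> Qy0; have [k [p [vp hp]]] := vertex_family Qy0.
exists k, p; apply/seteqP; split; last by apply: rat_hull_subQ => j; have [] := vp j.
apply: vertex_ind => [z /hp [j ->]|y v t1 t2 t10 t20 h1 h2]; first exact: rat_hull_vertex.
have t0 : 0 < t1 + t2 by rewrite addr_gt0.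
suff <- : t2 / (t1 + t2) *: (y + t1 *: v) + (1 - t2 / (t1 + t2)) *: (y - t2 *: v) = y.
  apply: rat_hull_convex => //; rewrite divr_ge0 ?(ltW t20) ?(ltW t0) //=.
  by rewrite ler_pdivrMr // mul1r lerDr (ltW t10).
by apply/matrixP => i j; rewrite !mxE; field; rewrite gt_eqF.
Qed.

End Pointed.
End Polytope.

Unset Implicit Arguments. Set Strict Implicit.
Theorem lemma2p2 (R : realType) (n m : nat)
    (a : 'I_m -> 'rV[int]_n) (b : 'I_m -> rat) (x : 'rV[R]_n) :
  (0 < n)%N ->
  (forall i, pt_primitive (a i)) ->
  pt_irredundant R a b ->
  pt_bounded_set (pt_Poly R a b) ->
  (forall v : 'rV[R]_n, pt_dirspace (pt_Poly R a b) v) ->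
  pt_relint (pt_core R a b) x ->
  (pt_perp (pt_dirspace (pt_core R a b)) =
     [set w | exists lam : 'I_m -> R,
        (forall i, 0 <= lam i) /\
        (forall i, pt_dF a b i x != (pt_mu R a b)^-1 -> lam i = 0) /\
        w = \sum_(i < m) lam i *: map_mx (fun z : int => z%:~R) (a i)])
  /\
  (pt_core R a b = [set x] ->
     pt_rat_polytope [set y : 'rV[R]_n | forall i, pt_dF a b i x = (pt_mu R a b)^-1 -> 0 <= pt_dF a b i y]
     /\ pt_Poly R a b `<=`
        [set y | forall i, pt_dF a b i x = (pt_mu R a b)^-1 -> 0 <= pt_dF a b i y]).
Proof.
move=> n_gt0 _ _ _ full_dim x_relint; split.
  by apply/seteqP; split=> w; [exact: perp_cone | exact: cone_perp].
move=> core1; split; last by move=> y Py i _; exact: Py.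
have span (w : 'rV[R]_n) : cone_on a (fun i => pt_dF a b i x == (pt_mu R a b)^-1) w.
  apply: (perp_cone x_relint); rewrite -/(pt_core R a b) core1.
  by move=> v /dirspace_set1 ->; exact: dot0r.
have [y0 Py0] : pt_Poly R a b !=set0.
  apply: (dirspace_nonempty (full_dim (const_mx 1))).
  by apply/negP => /eqP/matrixP/(_ ord0 (Ordinal n_gt0))/eqP; rewrite !mxE oner_eq0.
have -> : [set y : 'rV[R]_n | forall i, pt_dF a b i x = (pt_mu R a b)^-1 -> 0 <= pt_dF a b i y] =
    [set y : 'rV[R]_n | forall i, pt_dF a b i x == (pt_mu R a b)^-1 -> 0 <= pt_dF a b i y].
  by apply/seteqP; split=> y h i /eqP; exact: h.
by apply: (pointed_rat_polytope span (y0 := y0)) => i _; exact: Py0.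
Qed.
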